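(* Assume $k=2$, and write $y=y_1$. (1) $r=e-1$ if and only if one of the following holds: (a) $2y\ge c+e$; (b) $2y=(2q+1)e<c+e$ for some integer $q\ge1$, $p\ge2$, and $y\in v(xR:\mathfrak m)$. (2) $r=e-2$ if and only if $2y<c+e$ and, if $2y=(2q+1)e$ for some integer $q$, then $y\notin v(xR:\mathfrak m)$.
   Context: Let $(R,\mathfrak m)$ be a one-dimensional local Noetherian domain with quotient field $K$, not regular, analytically irreducible (the integral closure $\overline R$ of $R$ in $K$ is a DVR and a finite $R$-module) and residually rational. Let $v$ be the valuation of $\overline R$ normalized so a uniformizer $t$ has value 1, $v(R)=\{v(a):a\in R\setminus\{0\}\}$, $\mathfrak C=(R:_K\overline R)=t^c\overline R$ with $c$ the least element of $v(R)$ with $c+\mathbb N\subseteq v(R)$, $r=\ell_R((R:_K\mathfrak m)/R)$, $e$ the least positive element of $v(R)$. Let $x\in\mathfrak m$ with $v(x)=e$, $k=\ell_R(R/(\mathfrak C+xR))$, $(xR:\mathfrak m)=\{a\in K:a\mathfrak m\subseteq xR\}$ (an ideal of $R$) with value set $v(xR:\mathfrak m)$. Let $p$ be the integer with $c-e\le pe<c$. When $k=2$, $y_1$ is the unique $y\in v(R)$ with $0<y<c$ and $y-e\notin v(R)$ (the unique nonzero element of $v(R)\setminus v(\mathfrak C+xR)$). *)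

From mathcomp Require Import all_boot all_order all_algebra.
Set Implicit Arguments. Unset Strict Implicit. Unset Printing Implicit Defensive.
Import Order.TTheory GRing.Theory Num.Theory.
Local Open Scope ring_scope.

Section Defs.
Variable K : fieldType.
Implicit Types (A B N M I P R m : K -> Prop) (v : K -> int).

Definition ksubset A B := forall a, A a -> B a.
Definition kseteq A B := forall a, A a <-> B a.

(* v is a discrete valuation of K, normalized so that a uniformizer has
   value 1 (the value v 0 is irrelevant and never used). *)
Definition is_valuation v :=
  [/\ (forall a b, a != 0 -> b != 0 -> v (a * b) = v a + v b),
      (forall a b, a != 0 -> b != 0 -> a + b != 0 ->
         Num.min (v a) (v b) <= v (a + b))
    & exists t, t != 0 /\ v t = 1].

Definition valring v a := a = 0 \/ 0 <= v a.
Definition valmax v a := a = 0 \/ 0 < v a.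

Definition subring R :=
  [/\ R 0, R 1, (forall a b, R a -> R b -> R (a + b)),
      (forall a, R a -> R (- a)) & (forall a b, R a -> R b -> R (a * b))].

Definition Rmodule R M :=
  [/\ M 0, (forall a b, M a -> M b -> M (a + b))
    & (forall r a, R r -> M a -> M (r * a))].

Definition ideal R I := ksubset I R /\ Rmodule R I.

Definition Rspan R (s : seq K) a :=
  exists rs : seq K, [/\ size rs = size s, (forall i, (i < size s)%N -> R rs`_i)
                       & a = \sum_(i < size s) rs`_i * s`_i].

Definition local_with R m :=
  [/\ ideal R m, ~ m 1 & forall a, R a -> ~ m a -> exists b, R b /\ a * b = 1].

Definition noetherian R :=
  forall I, ideal R I -> exists s : seq K,
    (forall i, (i < size s)%N -> I s`_i) /\ kseteq I (Rspan R s).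

Definition prime_ideal R P :=
  [/\ ideal R P, ~ P 1 & forall a b, R a -> R b -> P (a * b) -> P a \/ P b].

Definition dim_one R m :=
  (exists a, m a /\ a != 0) /\
  forall P, prime_ideal R P -> (exists a, P a /\ a != 0) -> kseteq P m.

Definition is_frac_field R := forall a, exists b d, [/\ R b, R d, d != 0 & a = b / d].

Definition integral_over R a :=
  exists (n : nat) (cs : seq K), [/\ size cs = n, (forall i, (i < n)%N -> R cs`_i)
    & a ^+ n + \sum_(i < n) cs`_i * a ^+ i = 0].

(* regular local ring of dimension one = maximal ideal principal *)
Definition principal_max R m := exists g, R g /\ kseteq m (fun a => exists r, R r /\ a = r * g).

Definition setting v R m :=
  [/\ is_valuation v, subring R, is_frac_field R, local_with R m & noetherian R] /\
  [/\ dim_one R m,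
      (* analytically irreducible: integral closure of R in K is the DVR V of v *)
      (forall a, integral_over R a <-> valring v a),
      (exists s : seq K, kseteq (valring v) (Rspan R s)),
      ~ principal_max R m
    & (* residually rational: R/m -> V/tV is onto *)
      (forall a, valring v a -> exists b, R b /\ valmax v (a - b))].

Definition vset v (S : K -> Prop) (n : int) := exists a, [/\ S a, a != 0 & v a = n].

Definition Rchain R N M (n : nat) :=
  exists f : nat -> K -> Prop,
    [/\ kseteq (f 0%N) N, kseteq (f n) M, (forall i, (i <= n)%N -> Rmodule R (f i))
      & forall i, (i < n)%N -> ksubset (f i) (f i.+1) /\ ~ ksubset (f i.+1) (f i)].

Definition Rlength R N M (n : nat) :=
  Rchain R N M n /\ forall n', Rchain R N M n' -> (n' <= n)%N.

Definition colon A B a := forall b, B b -> A (a * b).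

Definition conductor v R := colon R (valring v).

Definition cond_plus_x v R x a := exists c0 r, [/\ conductor v R c0, R r & a = c0 + x * r].

Definition principal R x a := exists r, R r /\ a = x * r.

End Defs.

From mathcomp Require Import all_boot all_order all_algebra.
From mathcomp Require Import zify.
From Stdlib Require Import Classical.
Import Order.TTheory GRing.Theory Num.Theory.
Set Implicit Arguments. Unset Strict Implicit. Unset Printing Implicit Defensive.
Local Open Scope ring_scope.

(* The value semigroup S = v(R) controls every length in sight: since t^c V is
   contained in R and R is residually rational, an element of an R-module M
   between R and K can be approximated by elements with the same value until it
   lands in R, so that l_R(M/R) = #(v(M) \ S).  When k = 2, S below c consists of
   eN and y + eN.  The values of (R : m) outside S are then the e - 2 integers of
   [c - e, c) other than p e and the element of y + eN lying there, together with
   y - e exactly when y - e is in v(R : m), i.e. when y is in v(xR : m).  This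
   happens if 2y >= c + e; otherwise it forces 2y - e to be an element of S below
   c which is not in y + eN, i.e. 2y = (2q + 1) e. *)

Section Valuation.
Variables (K : fieldType) (v : K -> int).
Hypothesis hv : is_valuation v.
Implicit Types a b : K.

Lemma valM a b : a != 0 -> b != 0 -> v (a * b) = v a + v b.
Proof. by case: hv => h _ _; apply: h. Qed.

Lemma val1 : v 1 = 0.
Proof.
have : v (1 * 1) = v 1 + v 1 := valM (oner_neq0 K) (oner_neq0 K).
rewrite mulr1; lia.
Qed.

Lemma valV a : a != 0 -> v a^-1 = - v a.
Proof.
move=> a0; have := valM a0 (invr_neq0 a0); rewrite mulfV // val1; lia.
Qed.

Lemma valN a : a != 0 -> v (- a) = v a.
Proof.
move=> a0; have N10 : (-1 : K) != 0 by rewrite oppr_eq0 oner_neq0.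
have vN1 : v (-1) = 0 by have := valM N10 N10; rewrite mulrNN mulr1 val1; lia.
by rewrite -mulN1r valM // vN1 add0r.
Qed.

Lemma valX a n : a != 0 -> v (a ^+ n) = n%:Z * v a.
Proof.
move=> a0; elim: n => [|n IH]; first by rewrite expr0 val1 mul0r.
by rewrite exprS valM ?expf_neq0 // IH intS mulrDl mul1r.
Qed.

Lemma val_surj (n : int) : 0 <= n -> exists a, a != 0 /\ v a = n.
Proof.
case: hv => _ _ [t [t0 vt]] n0; exists (t ^+ `|n|%N); split; first exact: expf_neq0.
by rewrite valX // vt mulr1 gez0_abs.
Qed.

(* [vge z] is the fractional ideal t^z V; the junk value [v 0] is never consulted. *)
Definition vge (z : int) a := a = 0 \/ z <= v a.

Lemma vgeD z a b : vge z a -> vge z b -> vge z (a + b).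
Proof.
case: hv => _ hmin _.
case=> [->|ha]; first by rewrite add0r.
case=> [->|hb]; first by rewrite addr0; right.
have [a0|a0] := eqVneq a 0; first by rewrite a0 add0r; right.
have [b0|b0] := eqVneq b 0; first by rewrite b0 addr0; right.
have [->|ab0] := eqVneq (a + b) 0; first by left.
by right; apply: le_trans (hmin _ _ a0 b0 ab0); rewrite le_min ha hb.
Qed.

Lemma vgeN z a : vge z a -> vge z (- a).
Proof.
have [->|a0] := eqVneq a 0; first by rewrite oppr0; left.
by case=> [a0'|h]; [move: a0; rewrite a0' eqxx|right; rewrite valN].
Qed.

Lemma vgeB z a b : vge z a -> vge z b -> vge z (a - b).
Proof. by move=> ha hb; apply: vgeD => //; apply: vgeN. Qed.

Lemma vgeM z1 z2 a b : vge z1 a -> vge z2 b -> vge (z1 + z2) (a * b).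
Proof.
case=> [->|ha]; first by rewrite mul0r; left.
case=> [->|hb]; first by rewrite mulr0; left.
have [->|a0] := eqVneq a 0; first by rewrite mul0r; left.
have [->|b0] := eqVneq b 0; first by rewrite mulr0; left.
by right; rewrite valM // lerD.
Qed.

Lemma valD_lt a b : a != 0 -> v a < v b -> v (a + b) = v a.
Proof.
move=> a0 hab.
have ab0 : a + b != 0.
  apply: contraTneq hab => /eqP; rewrite addrC addr_eq0 => /eqP ->.
  by rewrite valN // ltxx.
have [ab|ge_ab] : vge (v a) (a + b) by apply: vgeD; right => //; apply: ltW.
  by move: ab0; rewrite ab eqxx.
apply/eqP; rewrite eq_le ge_ab andbT leNgt; apply/negP => hlt.
have : vge (v a + 1) ((a + b) - b) by apply: vgeB; right; lia.
by rewrite addrK => -[/eqP|]; [rewrite (negbTE a0)|lia].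
Qed.

End Valuation.

Section Modules.
Variables (K : fieldType) (R : K -> Prop).
Hypothesis hR : subring R.
Implicit Types a b l : K.

Lemma Rpred0 : R 0. Proof. by case: hR. Qed.
Lemma Rpred1 : R 1. Proof. by case: hR. Qed.
Lemma RpredD a b : R a -> R b -> R (a + b). Proof. by case: hR => _ _ h _ _; apply: h. Qed.
Lemma RpredN a : R a -> R (- a). Proof. by case: hR => _ _ _ h _; apply: h. Qed.
Lemma RpredM a b : R a -> R b -> R (a * b). Proof. by case: hR => _ _ _ _ h; apply: h. Qed.
Lemma RpredB a b : R a -> R b -> R (a - b). Proof. by move=> ha hb; apply/RpredD/RpredN. Qed.

Lemma RpredX a n : R a -> R (a ^+ n).
Proof.
by move=> ha; elim: n => [|n IH]; [rewrite expr0; apply: Rpred1|rewrite exprS; apply: RpredM].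
Qed.

Lemma subring_Rmodule : Rmodule R R.
Proof. by split; [exact: Rpred0|exact: RpredD|exact: RpredM]. Qed.

Variable M : K -> Prop.
Hypothesis hM : Rmodule R M.

Lemma Rmodule0 : M 0. Proof. by case: hM. Qed.
Lemma RmoduleD a b : M a -> M b -> M (a + b). Proof. by case: hM => _ h _; apply: h. Qed.
Lemma RmoduleM l a : R l -> M a -> M (l * a). Proof. by case: hM => _ _ h; apply: h. Qed.

Lemma RmoduleB l a b : R l -> M a -> M b -> M (a - l * b).
Proof. by move=> hl ha hb; rewrite -mulNr; apply/RmoduleD/RmoduleM/hb/RpredN. Qed.

Lemma RmoduleBK l a b : R l -> M (a - l * b) -> M b -> M a.
Proof. by move=> hl hab hb; rewrite -(subrK (l * b) a); apply/RmoduleD/RmoduleM. Qed.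

End Modules.

Lemma colon_Rmodule (K : fieldType) (R B : K -> Prop) :
  subring R -> Rmodule R (colon R B).
Proof.
move=> hR; split=> [b _|a b ha hb d hd|l a hl ha d hd].
- by rewrite mul0r; apply: Rpred0.
- by rewrite mulrDl; apply: RpredD (ha d hd) (hb d hd).
- by rewrite -mulrA; apply: RpredM (ha d hd).
Qed.

Lemma vset_sub (K : fieldType) (v : K -> int) (A B : K -> Prop) d :
  ksubset A B -> vset v A d -> vset v B d.
Proof. by move=> hAB [a [ha a0 ea]]; exists a; split => //; apply: hAB. Qed.

Section ResiduallyRational.
Variables (K : fieldType) (v : K -> int) (R m : K -> Prop).
Hypothesis hv : is_valuation v.
Hypothesis hR : subring R.
Hypothesis hRV : ksubset R (valring v).
Hypothesis hloc : local_with R m.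
Hypothesis hres : forall a, valring v a -> exists b, R b /\ valmax v (a - b).
Implicit Types a b l s z : K.

Lemma max_Rmodule : Rmodule R m. Proof. by case: hloc => -[]. Qed.
Lemma max_sub a : m a -> R a. Proof. by case: hloc => -[hmR _] _ _; apply: hmR. Qed.

Lemma vge_Rmodule t : Rmodule R (vge v t).
Proof.
split=> [|a b|l a hl ha]; [by left|exact: (vgeD hv)|].
by rewrite -[t]add0r; exact: (vgeM hv (hRV hl) ha).
Qed.

Lemma val_gt0_max b : R b -> b != 0 -> 0 < v b -> m b.
Proof.
move=> hb b0 vb; apply: NNPP => nmb.
case: hloc => _ _ /(_ b hb nmb) [d [hd bd1]].
have d0 : d != 0 by apply: contra_eq_neq bd1 => ->; rewrite mulr0 eq_sym oner_neq0.
have := valM hv b0 d0; rewrite bd1 (val1 hv).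
by case: (hRV hd) => [/eqP|]; [rewrite (negbTE d0)|lia].
Qed.

Lemma residue_approx z s : z != 0 -> s != 0 -> v z = v s ->
  exists l, R l /\ vge v (v z + 1) (z - l * s).
Proof.
move=> z0 s0 vzs.
have [l [hl hzl]] : exists l, R l /\ valmax v (z / s - l).
  by apply: hres; right; rewrite valM ?invr_eq0 // (valV hv) // vzs subrr.
exists l; split => //; rewrite vzs addrC -[z](divfK s0) -mulrBl.
by apply: (vgeM hv); [case: hzl => [->|]; [left|right] | right].
Qed.

Lemma max_val_gt0 b : m b -> b != 0 -> 0 < v b.
Proof.
move=> hb b0; case: (hRV (max_sub hb)) => [/eqP|]; first by rewrite (negbTE b0).
rewrite le_eqVlt => /orP[/eqP vb0|//]; exfalso.
have [l [hl hw]] := residue_approx (oner_neq0 K) b0 (etrans (val1 hv) vb0).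
have hlb : m (l * b) := RmoduleM max_Rmodule hl hb.
have mw : m (1 - l * b).
  case: hw => [->|hw]; first exact: Rmodule0 max_Rmodule.
  have [w0|w0] := eqVneq (1 - l * b) 0; first by rewrite w0; exact: Rmodule0 max_Rmodule.
  apply: (val_gt0_max _ w0); first by apply: (RpredB hR); [apply: Rpred1 | apply: max_sub].
  by move: hw; rewrite (val1 hv).
by case: hloc => _ + _; apply; rewrite -(subrK (l * b) 1);
  exact: (RmoduleD max_Rmodule mw hlb).
Qed.

Lemma approx_sub M N t : Rmodule R M -> Rmodule R N ->
  (forall z, M z -> z != 0 -> t <= v z -> N z) ->
  (forall z, M z -> z != 0 -> v z < t -> exists s, [/\ M s, N s, s != 0 & v s = v z]) ->
  ksubset M N.
Proof.
move=> hM hN high low.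
suff H n z : M z -> z != 0 -> t - v z <= n%:Z -> N z.
  move=> z hz; have [->|z0] := eqVneq z 0; first exact: Rmodule0 hN.
  by apply: (H `|t - v z|%N) => //; lia.
elim: n z => [|n IH] z hz z0 hn; first by apply: high => //; lia.
have [tz|zt] := lerP t (v z); first exact: high.
have [s [hsM hsN s0 vs]] := low z hz z0 zt.
have [l [hl hzl]] := residue_approx z0 s0 (esym vs).
apply: (RmoduleBK hN hl _ hsN).
case: hzl => [->|hzl]; first exact: Rmodule0 hN.
have [->|zl0] := eqVneq (z - l * s) 0; first exact: Rmodule0 hN.
by apply: (IH _ (RmoduleB hR hM hl hz hsM) zl0); lia.
Qed.

End ResiduallyRational.

Section Conductor.
Variables (K : fieldType) (v : K -> int) (R : K -> Prop).
Hypothesis hv : is_valuation v.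
Hypothesis hR : subring R.

Lemma common_denominator (s : seq K) : is_frac_field R ->
  exists2 d, R d /\ d != 0 & forall i, (i < size s)%N -> R (d * s`_i).
Proof.
move=> hfrac; elim: s => [|a s [d [hd d0] hds]].
  by exists 1; [split; [exact: (Rpred1 hR)|exact: oner_neq0] | case].
have [b [d1 [hb hd1 d10 ->]]] := hfrac a.
exists (d1 * d); first by split; [exact: (RpredM hR)|exact: mulf_neq0].
case=> [|i] /= hi; last by rewrite -mulrA; apply: (RpredM hR) => //; apply: hds.
by rewrite mulrAC [d1 * _]mulrC divfK //; apply: (RpredM hR).
Qed.

Lemma finite_valring_vge : is_frac_field R ->
  (exists s : seq K, kseteq (valring v) (Rspan R s)) -> exists t, ksubset (vge v t) R.
Proof.
move=> hfrac [s hs]; have [d [hd d0] hds] := common_denominator s hfrac.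
exists (v d) => z [->|hz]; first exact: (Rpred0 hR).
have [-> |z0] := eqVneq z 0; first exact: (Rpred0 hR).
rewrite -[z](divfK d0) mulrC.
have [rs [_ hrs ->]] : Rspan R s (z / d).
  by apply/hs; right; rewrite valM ?invr_eq0 // (valV hv) // subr_ge0.
rewrite mulr_sumr; apply: (big_ind R); [exact: (Rpred0 hR)|exact: (RpredD hR)|].
by move=> i _; rewrite mulrCA; apply: (RpredM hR); [apply: hrs|apply: hds].
Qed.

Hypothesis hRV : ksubset R (valring v).
Hypothesis hres : forall a, valring v a -> exists b, R b /\ valmax v (a - b).

Lemma vge_sub_R (c : int) : is_frac_field R ->
  (exists s : seq K, kseteq (valring v) (Rspan R s)) ->
  (forall n, c <= n -> vset v R n) -> ksubset (vge v c) R.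
Proof.
move=> hfrac hfin hcS; have [t ht] := finite_valring_vge hfrac hfin.
apply: (approx_sub hv hR hres (vge_Rmodule hv hRV c) (subring_Rmodule hR) (t := t)).
  by move=> z _ _ htz; apply: ht; right.
move=> z [-> |hcz] z0 _; first by rewrite eqxx in z0.
have [s [hs s0 vs]] := hcS _ hcz.
by exists s; split => //; right; rewrite vs.
Qed.

End Conductor.

Lemma seq_min_ex (D : seq int) : D != [::] ->
  exists2 d0, d0 \in D & forall d, d \in D -> d0 <= d.
Proof.
move=> D0; have := sort_sorted (@le_total _ int) D.
case E : (sort <=%R D) => [|d0 s].
  by move/(congr1 size): E; rewrite size_sort; case: D D0.
move=> /= hs; exists d0; first by rewrite -(mem_sort <=%R) E mem_head.
move=> d; rewrite -(mem_sort <=%R) E inE => /orP[/eqP -> //|hd].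
by move: hs; rewrite path_sortedE; [case/andP => /allP /(_ d hd)|exact: le_trans].
Qed.

Section Length.
Variables (K : fieldType) (v : K -> int) (R : K -> Prop) (c : int).
Hypothesis hv : is_valuation v.
Hypothesis hR : subring R.
Hypothesis hRV : ksubset R (valring v).
Hypothesis hres : forall a, valring v a -> exists b, R b /\ valmax v (a - b).
Hypothesis hcond : ksubset (vge v c) R.
Implicit Types M N : K -> Prop.

Lemma values_sub_module M N : Rmodule R M -> Rmodule R N -> ksubset R N -> ksubset N M ->
  (forall d, vset v M d -> vset v N d) -> ksubset M N.
Proof.
move=> hM hN hRN hNM hval; apply: (approx_sub hv hR hres hM hN (t := c)).
  by move=> z _ _ hcz; apply/hRN/hcond; right.
move=> z hz z0 _; have [s [hs s0 vs]] : vset v N (v z) by apply: hval; exists z.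
by exists s; split => //; apply: hNM.
Qed.

Lemma strict_sub_new_value M N : Rmodule R M -> Rmodule R N -> ksubset R N -> ksubset N M ->
  ~ ksubset M N -> exists d, vset v M d /\ ~ vset v N d.
Proof.
move=> hM hN hRN hNM hMN; apply: NNPP => hnew.
apply: hMN; apply: values_sub_module hM hN hRN hNM _ => d hd.
by apply: NNPP => hNd; apply: hnew; exists d.
Qed.

Lemma Rchain_le_values M (D : seq int) n : Rchain R R M n ->
  (forall d, vset v M d -> ~ vset v R d -> d \in D) -> (n <= size D)%N.
Proof.
case=> f [f0 fn fmod fstep] hD.
have f_mono i j : (i <= j <= n)%N -> ksubset (f i) (f j).
  elim: j => [|j IH] /andP[hij hjn]; first by move: hij; rewrite leqn0 => /eqP ->.
  rewrite leq_eqVlt in hij; case/orP: hij => [/eqP -> //|hij] a ha.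
  by apply: (fstep j hjn).1; apply: IH ha; rewrite -ltnS hij ltnW.
have Rf i : (i <= n)%N -> ksubset R (f i).
  by move=> hi a /f0 ha; apply: (f_mono 0%N i).
suff [L [sizeL uniqL hL]] : exists L : seq int, [/\ size L = n, uniq L &
    forall d, d \in L -> vset v (f n) d /\ ~ vset v R d].
  rewrite -sizeL; apply: uniq_leq_size uniqL _ => d /hL [hd nRd].
  by apply: hD nRd; apply: vset_sub hd => a /fn.
elim: {-2}n (leqnn n) => [|k IH] hk; first by exists [::].
have [L [sizeL uniqL hL]] := IH (ltnW hk).
have [d [hdk1 hdk]] := strict_sub_new_value (fmod _ hk) (fmod _ (ltnW hk))
  (Rf _ (ltnW hk)) (fstep k hk).1 (fstep k hk).2.
exists (d :: L); split => /=; first by rewrite sizeL.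
  by rewrite uniqL andbT; apply/negP => /hL [].
move=> d'; rewrite inE => /orP[/eqP -> |/hL [hd' nRd']].
  by split => // /(vset_sub (Rf _ (ltnW hk))).
by split => //; apply: vset_sub hd'; exact: (fstep k hk).1.
Qed.

Definition Rplus_above M t z := exists r a, [/\ R r, M a, vge v t a & z = r + a].

Lemma Rplus_above_Rmodule M t : Rmodule R M -> Rmodule R (Rplus_above M t).
Proof.
move=> hM; split.
- by exists 0, 0; split; [exact: Rpred0 hR|exact: Rmodule0 hM|left|rewrite addr0].
- move=> _ _ [r1 [a1 [hr1 ha1 hg1 ->]]] [r2 [a2 [hr2 ha2 hg2 ->]]].
  exists (r1 + r2), (a1 + a2); split;
    [exact: (RpredD hR)|exact: (RmoduleD hM)|exact: (vgeD hv)|].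
  by rewrite addrACA.
- move=> l _ hl [r [a [hr ha hga ->]]].
  exists (l * r), (l * a); split;
    [exact: (RpredM hR)|exact: (RmoduleM hM)|..|by rewrite mulrDr].
  exact: (RmoduleM (vge_Rmodule hv hRV t)).
Qed.

Lemma Rplus_above_sub M t : Rmodule R M -> ksubset R M -> ksubset (Rplus_above M t) M.
Proof. by move=> hM hRM _ [r [a [hr ha _ ->]]]; apply: (RmoduleD hM) => //; apply: hRM. Qed.

Lemma R_sub_Rplus_above M t : Rmodule R M -> ksubset R (Rplus_above M t).
Proof.
by move=> hM r hr; exists r, 0; split => //; [exact: Rmodule0 hM|left|rewrite addr0].
Qed.

Lemma vset_Rplus_above M t d : vset v M d -> t <= d -> vset v (Rplus_above M t) d.
Proof.
case=> a [ha a0 <-] hta; exists a; split => //.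
by exists 0, a; split => //; [exact: Rpred0 hR|right|rewrite add0r].
Qed.

Lemma vset_Rplus_above_lt M t d : vset v (Rplus_above M t) d -> d < t -> vset v R d.
Proof.
case=> _ [[r [a [hr ha hga ->]]] z0 <-] hlt.
have [r0|r0] := eqVneq r 0.
  by move: z0 hlt; rewrite r0 add0r; case: hga => [->|]; [rewrite eqxx|lia].
have hrt : v r < t.
  rewrite ltNge; apply/negP => htr.
  by case: (vgeD hv (or_intror htr) hga) => [/eqP|]; [rewrite (negbTE z0)|lia].
exists r; split => //; case: hga => [->|hta]; first by rewrite addr0.
by rewrite (valD_lt hv) //; apply: lt_le_trans hta.
Qed.

Lemma Rchain_extend N M M' n : Rchain R N M n -> Rmodule R M' ->
  ksubset M M' -> ~ ksubset M' M -> Rchain R N M' n.+1.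
Proof.
case=> f [f0 fn fmod fstep] hM' hMM' hM'M.
exists (fun i => if (i <= n)%N then f i else M'); split => [|a|i hi|i].
- by rewrite leq0n.
- by rewrite ltnn.
- by case: leqP => hin; [exact: fmod|].
rewrite ltnS; case: (ltngtP i n) => [hin|//|->] _; first exact: fstep.
split => [a /fn /hMM' // | hsub].
by apply: hM'M => a /hsub /fn.
Qed.

Lemma Rchain_values n M (D : seq int) : size D = n -> Rmodule R M -> ksubset R M ->
  uniq D -> (forall d, d \in D <-> vset v M d /\ ~ vset v R d) -> Rchain R R M n.
Proof.
elim: n M D => [|n IH] M D sizeD hM hRM uD hD.
  have MR : ksubset M R.
    apply: values_sub_module hM (subring_Rmodule hR) _ hRM _ => // d hd.
    by apply: NNPP => nRd; have := (hD d).2 (conj hd nRd); rewrite (size0nil sizeD).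
  exists (fun=> R); split => [a|a|i _|i] //; first by split; [exact: hRM|exact: MR].
  exact: subring_Rmodule hR.
have [d0 d0D d0min] : exists2 d0, d0 \in D & forall d, d \in D -> d0 <= d.
  by apply: seq_min_ex; case: D sizeD {hD uD}.
have [hMd0 nRd0] := (hD d0).1 d0D.
apply: (Rchain_extend (M := Rplus_above M (d0 + 1))).
- apply: (IH _ (rem d0 D)); first by rewrite size_rem // sizeD.
  + exact: Rplus_above_Rmodule.
  + exact: R_sub_Rplus_above.
  + exact: rem_uniq.
  move=> d; rewrite (mem_rem_uniq _ uD) inE; split.
    case/andP => dd0 dD; have [hMd nRd] := (hD d).1 dD; split => //.
    by apply: vset_Rplus_above hMd _; have := d0min d dD; move: dd0; lia.
  case=> hd nRd; apply/andP; split.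
    by apply/eqP => dd0; apply: nRd; apply: vset_Rplus_above_lt hd _; lia.
  by apply/hD; split => //; apply: vset_sub hd; exact: Rplus_above_sub.
- exact: hM.
- exact: Rplus_above_sub.
by move=> hsub; apply: nRd0; apply: vset_Rplus_above_lt (vset_sub hsub hMd0) _; lia.
Qed.

Lemma Rlength_values M (D : seq int) r : Rmodule R M -> ksubset R M -> uniq D ->
  (forall d, d \in D <-> vset v M d /\ ~ vset v R d) -> Rlength R R M r -> r = size D.
Proof.
move=> hM hRM uD hD [hch hmax]; apply/eqP; rewrite eqn_leq.
rewrite (Rchain_le_values hch) => [|d hd nRd]; last exact/hD.
by rewrite hmax //; apply: Rchain_values.
Qed.

End Length.

Lemma R_sub_colon (K : fieldType) (R B : K -> Prop) :
  subring R -> ksubset B R -> ksubset R (colon R B).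
Proof. by move=> hR hBR a ha b hb; apply: (RpredM hR) => //; apply: hBR. Qed.

Section ValueSemigroup.
Variables (K : fieldType) (v : K -> int) (R m : K -> Prop) (c e y p : int) (x : K).
Hypothesis hv : is_valuation v.
Hypothesis hR : subring R.
Hypothesis hRV : ksubset R (valring v).
Hypothesis hloc : local_with R m.
Hypothesis hres : forall a, valring v a -> exists b, R b /\ valmax v (a - b).
Hypothesis hcond : ksubset (vge v c) R.
Hypothesis hcS : forall n, c <= n -> vset v R n.
Hypothesis he0 : 0 < e.
Hypothesis hemin : forall n, vset v R n -> 0 < n -> e <= n.
Hypothesis hxm : m x.
Hypothesis hx0 : x != 0.
Hypothesis hxe : v x = e.
Hypothesis hy : vset v R y.
Hypothesis hyc : 0 < y < c.
Hypothesis hye : ~ vset v R (y - e).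
Hypothesis hyu : forall y', vset v R y' -> 0 < y' < c -> ~ vset v R (y' - e) -> y' = y.
Hypothesis hp : c - e <= p * e < c.

Local Notation S := (vset v R).
Local Notation T := (vset v (colon R m)).

Lemma S_ge0 n : S n -> 0 <= n.
Proof. by case=> a [ha a0 <-]; case: (hRV ha) => [/eqP|//]; rewrite (negbTE a0). Qed.

Lemma S_mul_e (i : int) : 0 <= i -> S (i * e).
Proof.
move=> i0; exists (x ^+ `|i|%N); split; [|exact: expf_neq0|].
  by apply: (RpredX hR); apply: (max_sub hloc).
by rewrite (valX hv) // hxe gez0_abs.
Qed.

Lemma S_y_mul_e (j : int) : 0 <= j -> S (y + j * e).
Proof.
move=> j0; case: hy => a [ha a0 <-]; case: (S_mul_e j0) => b [hb b0 <-].
by exists (a * b); split; [exact: (RpredM hR)|exact: mulf_neq0|exact: valM].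
Qed.

(* The uniqueness of y (that is, k = 2) makes v(R) below c equal to eN together with y + eN. *)
Lemma values_below_c s : S s -> s < c ->
  (exists2 i, 0 <= i & s = i * e) \/ (exists2 j, 0 <= j & s = y + j * e).
Proof.
suff H (n : nat) : S s -> s < c -> s <= n%:Z ->
    (exists2 i, 0 <= i & s = i * e) \/ (exists2 j, 0 <= j & s = y + j * e).
  by move=> hs hsc; apply: (H `|s|%N) => //; have := S_ge0 hs; lia.
elim: n s => [|n IH] s hs hsc hsn.
  by left; exists 0 => //; have := S_ge0 hs; lia.
have [->|s0] := eqVneq s 0; first by left; exists 0; rewrite ?mul0r.
have s_gt0 : 0 < s by have := S_ge0 hs; lia.
case: (classic (S (s - e))) => hse.
  have := S_ge0 hse => hse0.
  have [[i i0 hi]|[j j0 hj]] := IH (s - e) hse ltac:(lia) ltac:(lia).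
    by left; exists (i + 1); lia.
  by right; exists (j + 1); lia.
by right; exists 0; rewrite ?mul0r ?addr0 //; apply: hyu => //; lia.
Qed.

Lemma e_le_y : e <= y.
Proof. by apply: hemin hy _; lia. Qed.

Lemma y_neq_mul_e (i : int) : y <> i * e.
Proof.
move=> yi; apply: hye; have -> : y - e = (i - 1) * e by rewrite yi mulrBl mul1r.
by apply: S_mul_e; have := e_le_y; nia.
Qed.

Lemma e_ge2 : 2 <= e.
Proof.
have : e != 1 by apply/eqP => e1; apply: (@y_neq_mul_e y); rewrite e1 mulr1.
lia.
Qed.

Lemma S_pe : S (p * e).
Proof. by apply: S_mul_e; have := e_le_y; nia. Qed.

Lemma mul_e_window_uniq (a i j : int) :
  a <= i * e < a + e -> a <= j * e < a + e -> i = j.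
Proof. by move=> *; nia. Qed.

Lemma max_val_ge_e b : m b -> b != 0 -> e <= v b.
Proof.
move=> hb b0; apply: hemin; first by exists b; split => //; apply: (max_sub hloc).
exact: (max_val_gt0 hv hR hRV hloc hres).
Qed.

Lemma T_ge n : c - e <= n -> T n.
Proof.
move=> hn; have [a [a0 va]] := val_surj hv (n := n) ltac:(have := e_le_y; lia).
exists a; split => // b hb; apply: hcond.
have [-> |b0] := eqVneq b 0; first by left; rewrite mulr0.
by right; rewrite (valM hv) // va; have := max_val_ge_e hb b0; lia.
Qed.

Lemma y_max : exists u, [/\ m u, u != 0 & v u = y].
Proof.
case: hy => u [hu u0 vu]; exists u; split => //.
by apply: (val_gt0_max hv hRV hloc) => //; rewrite vu; lia.
Qed.

Lemma T_values a : colon R m a -> a != 0 -> S (v a + e) /\ S (v a + y).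
Proof.
move=> ha a0; have [u [hu u0 vu]] := y_max.
by split; [exists (a * x)|exists (a * u)]; split;
  rewrite ?mulf_neq0 ?(valM hv) ?hxe ?vu //; apply: ha.
Qed.

Definition ywin := y + ((c - 1 - y) %/ e)%Z * e.

Lemma ywin_window : c - e <= ywin < c.
Proof.
rewrite /ywin; have := lez_floor (c - 1 - y) (lt0r_neq0 he0).
by have := ltz_ceil (c - 1 - y) he0; lia.
Qed.

Lemma S_ywin : S ywin.
Proof. by apply: S_y_mul_e; rewrite divz_ge0 //; lia. Qed.

Lemma window_values d : c - e <= d < c -> S d -> d = p * e \/ d = ywin.
Proof.
move=> hd hs; case: (values_below_c hs _) => [|[i _ di]|[j _ dj]]; first lia.
  by left; rewrite di; congr (_ * _); apply: (@mul_e_window_uniq (c - e)); lia.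
right; rewrite dj /ywin; congr (_ + _ * _); apply: (@mul_e_window_uniq (c - e - y)).
  by lia.
by have := ywin_window; rewrite /ywin; lia.
Qed.

Definition window := [seq c - e + i%:Z | i <- iota 0 `|e|].

Lemma mem_window d : (d \in window) = (c - e <= d < c).
Proof.
apply/mapP/idP => [[i] |hd]; first by rewrite mem_iota => hi ->; lia.
by exists (absz (d - (c - e))%R); [rewrite mem_iota; lia|lia].
Qed.

Lemma uniq_window : uniq window.
Proof. by rewrite map_inj_uniq ?iota_uniq // => i j /addrI /eqP; rewrite eqz_nat => /eqP. Qed.

(* The values of (R : m) outside v(R), except possibly y - e. *)
Definition gap := rem ywin (rem (p * e) window).

Lemma uniq_gap : uniq gap.
Proof. exact/rem_uniq/rem_uniq/uniq_window. Qed.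

Lemma mem_gap d : (d \in gap) = [&& d != ywin, d != p * e & c - e <= d < c].
Proof.
rewrite (mem_rem_uniq _ (rem_uniq _ uniq_window)) inE.
by rewrite (mem_rem_uniq _ uniq_window) inE mem_window.
Qed.

Lemma size_gap : size gap = (`|e| - 2)%N.
Proof.
have pe_ywin : p * e != ywin.
  apply/eqP; have := @y_neq_mul_e (p - ((c - 1 - y) %/ e)%Z).
  by rewrite /ywin mulrBl; lia.
rewrite size_rem ?size_rem ?size_map ?size_iota; first lia.
  by rewrite mem_window.
by rewrite (mem_rem_uniq _ uniq_window) inE mem_window eq_sym pe_ywin ywin_window.
Qed.

Lemma T_notS d : T d -> ~ S d -> c - e <= d < c \/ d = y - e.
Proof.
case=> a [ha a0 <-] nS; have [Se Sy] := T_values ha a0.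
have ac : v a < c by rewrite ltNge; apply/negP => /hcS.
have [ce|ce] := lerP c (v a + e); first by left; lia.
case: (values_below_c Se ce) => [[i i0 hi]|[j j0 hj]].
  have [i00|i1] : i = 0 \/ 1 <= i by lia.
    by exfalso; apply: hye; have -> : y - e = v a + y by move: hi; rewrite i00; lia.
  exfalso; apply: nS; have -> : v a = (i - 1) * e by rewrite mulrBl; lia.
  by apply: S_mul_e; lia.
have [j00|j1] : j = 0 \/ 1 <= j by lia.
  by right; move: hj; rewrite j00; lia.
exfalso; apply: nS; have -> : v a = y + (j - 1) * e by rewrite mulrBl; lia.
by apply: S_y_mul_e; lia.
Qed.

Lemma colon_gap_values d : T d /\ ~ S d <-> d \in gap \/ (d = y - e /\ T (y - e)).
Proof.
rewrite mem_gap; split.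
  case=> hT nS; case: (T_notS hT nS) => [hw|dy]; last by right; rewrite -dy.
  left; rewrite hw andbT; apply/andP; split; apply/eqP => hd; apply: nS; rewrite hd.
    exact: S_ywin.
  exact: S_pe.
case=> [/and3P[/eqP nyw /eqP npe hw]|[-> //]].
split; first by apply: T_ge; lia.
by move=> hs; case: (window_values hw hs).
Qed.

Lemma Rlength_colon r : Rlength R R (colon R m) r ->
  (T (y - e) -> r%:Z = e - 1) /\ (~ T (y - e) -> r%:Z = e - 2).
Proof.
move=> hlen; have e2 := e_ge2.
have len := Rlength_values hv hR hRV hres hcond (colon_Rmodule m hR)
  (R_sub_colon hR (max_sub hloc)) _ _ hlen.
split => hT.
  have -> : r = size ((y - e) :: gap).
    apply: len => [|d]; first by rewrite /= uniq_gap andbT mem_gap; lia.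
    rewrite inE colon_gap_values; split; first by case/orP => [/eqP ->|]; [right|left].
    by case=> [hd|[-> _]]; rewrite ?hd ?orbT ?eqxx.
  by rewrite /= size_gap; lia.
have -> : r = size gap.
  apply: len => [|d]; first exact: uniq_gap.
  by rewrite colon_gap_values; split => [|[//|[]]]; [left|].
by rewrite size_gap; lia.
Qed.

(* u / x has value y - e and maps m into R: on x^i it gives u x^(i-1), and every
   other value y + je of m is raised to at least 2y - e >= c. *)
Lemma colon_yme_of_large : c + e <= 2 * y -> T (y - e).
Proof.
move=> h2y; have [u [hum u0 vu]] := y_max; have mM := max_Rmodule hloc.
have ux0 : u / x != 0 by rewrite mulf_neq0 ?invr_eq0.
have vux : v (u / x) = y - e by rewrite (valM hv) ?invr_eq0 // (valV hv) // vu hxe.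
pose N b := m b /\ R (u / x * b).
have hN : Rmodule R N.
  split=> [|a b [ma ra] [mb rb]|l b hl [mb rb]]; split.
  - exact: Rmodule0 mM.
  - by rewrite mulr0; apply: Rpred0 hR.
  - exact: (RmoduleD mM).
  - by rewrite mulrDr; apply: (RpredD hR).
  - exact: (RmoduleM mM).
  - by rewrite mulrCA; apply: (RpredM hR).
suff mN : ksubset m N by exists (u / x); split => // b /mN [].
apply: (approx_sub hv hR hres mM hN (t := c)) => [b mb b0 hcb|b mb b0 hbc].
  split => //; apply: hcond; right; rewrite (valM hv) // vux.
  by have := e_le_y; lia.
have Sb : S (v b) by exists b; split => //; apply: (max_sub hloc).
have b_ge_e := max_val_ge_e mb b0.
case: (values_below_c Sb hbc) => [[i i0 hi]|[j j0 hj]]; last first.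
  exists b; split => //; split => //; apply: hcond; right.
  by rewrite (valM hv) // vux hj; nia.
have [n ni] : exists n : nat, i = n.+1%:Z by exists (absz (i - 1)); nia.
have Rxn : R (x ^+ n) by apply: (RpredX hR); apply: (max_sub hloc).
have mxn : m (x ^+ n.+1) by rewrite exprSr; apply: (RmoduleM mM).
exists (x ^+ n.+1); split => //; [split => //|exact: expf_neq0|].
  by rewrite exprS mulrA divfK //; apply: (RpredM hR) => //; exact: (max_sub hloc).
by rewrite (valX hv) // hxe hi ni.
Qed.

Lemma colon_yme_principal : T (y - e) <-> vset v (colon (principal R x) m) y.
Proof.
split=> -[a [ha a0 va]].
  exists (x * a); split; [|exact: mulf_neq0|by rewrite (valM hv) // hxe va; lia].
  by move=> b hb; exists (a * b); split; [exact: ha|rewrite mulrA].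
exists (a / x); split; [|by rewrite mulf_neq0 ?invr_eq0|].
  move=> b hb; have [r [hr abr]] := ha b hb.
  by rewrite mulrAC abr mulrAC mulfV // mul1r.
by rewrite (valM hv) ?invr_eq0 // (valV hv) // va hxe; lia.
Qed.

Lemma colon_yme_odd : T (y - e) -> 2 * y < c + e ->
  exists2 q, 1 <= q & 2 * y = (2 * q + 1) * e.
Proof.
case=> a [ha a0 va] hlt; have [_] := T_values ha a0; rewrite va => hS.
have := e_le_y; case: (values_below_c hS _) => [|[i i0 hi]|[j j0 hj]]; first lia.
  have [q iq] : exists q, i = 2 * q \/ i = 2 * q + 1 by exists (i %/ 2)%Z; lia.
  case: iq => iq; first by exists q; nia.
  by exfalso; apply: (@y_neq_mul_e (q + 1)); nia.
by exfalso; apply: (@y_neq_mul_e (j + 1)); nia.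
Qed.

Lemma colon_yme_iff : T (y - e) <-> (c + e <= 2 * y \/
  exists q : int, [/\ 1 <= q, 2 * y = (2 * q + 1) * e, 2 * y < c + e, 2 <= p
                  & vset v (colon (principal R x) m) y]).
Proof.
split=> [hT|[|[q [_ _ _ _ /colon_yme_principal //]]]]; last exact: colon_yme_of_large.
have [|hlt] := lerP (c + e) (2 * y); [by left|right].
have [q q1 hq] := colon_yme_odd hT hlt.
exists q; split => //; last exact/colon_yme_principal.
by have := e_le_y; nia.
Qed.

Lemma not_colon_yme_iff : ~ T (y - e) <-> (2 * y < c + e /\
  forall q : int, 2 * y = (2 * q + 1) * e -> ~ vset v (colon (principal R x) m) y).
Proof.
split=> [nT|[hlt hq] hT].
  split; first by rewrite ltNge; apply/negP => /colon_yme_of_large.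
  by move=> q _ /colon_yme_principal.
have [q _ hq2] := colon_yme_odd hT hlt.
exact: hq q hq2 (colon_yme_principal.1 hT).
Qed.

Lemma colon_length_iff r : Rlength R R (colon R m) r ->
  ((r%:Z = e - 1) <-> (c + e <= 2 * y \/
      exists q : int, [/\ 1 <= q, 2 * y = (2 * q + 1) * e, 2 * y < c + e, 2 <= p
                       & vset v (colon (principal R x) m) y])) /\
  ((r%:Z = e - 2) <-> (2 * y < c + e /\
      forall q : int, 2 * y = (2 * q + 1) * e -> ~ vset v (colon (principal R x) m) y)).
Proof.
move=> /Rlength_colon [len1 len2]; rewrite -colon_yme_iff -not_colon_yme_iff.
case: (classic (T (y - e))) => hT.
  rewrite (len1 hT); split; first by split.
  by split=> [|/(_ hT)] //; lia.
rewrite (len2 hT); split; last by split.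
by split=> [|/hT] //; lia.
Qed.

End ValueSemigroup.

Theorem proposition1p12 (K : fieldType) (v : K -> int) (R m : K -> Prop)
  (c e : int) (x : K) (y p : int) (r : nat) :
  setting v R m ->
  (* c: least element of v(R) with c + N contained in v(R) *)
  (vset v R c /\ (forall n, c <= n -> vset v R n) /\
     forall c', vset v R c' -> (forall n, c' <= n -> vset v R n) -> c <= c') ->
  (* e: least positive element of v(R) *)
  (vset v R e /\ 0 < e /\ forall n, vset v R n -> 0 < n -> e <= n) ->
  m x -> x != 0 -> v x = e ->
  (* k = l_R(R/(C + xR)) = 2; unused, the uniqueness of y below encodes it *)
  Rlength R (cond_plus_x v R x) R 2 ->
  (* y = y_1: the unique y in v(R) with 0 < y < c and y - e not in v(R) *)
  (vset v R y /\ 0 < y < c /\ ~ vset v R (y - e)) ->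
  (forall y', vset v R y' -> 0 < y' < c -> ~ vset v R (y' - e) -> y' = y) ->
  c - e <= p * e < c ->
  (* r = l_R((R :_K m)/R) *)
  Rlength R R (colon R m) r ->
  ((r%:Z = e - 1) <->
     (c + e <= 2 * y \/
      exists q : int, [/\ 1 <= q, 2 * y = (2 * q + 1) * e, 2 * y < c + e, 2 <= p
                       & vset v (colon (principal R x) m) y])) /\
  ((r%:Z = e - 2) <->
     (2 * y < c + e /\
      forall q : int, 2 * y = (2 * q + 1) * e -> ~ vset v (colon (principal R x) m) y)).
Proof.
move=> [[hv hR hfrac hloc _] [_ hint hfin _ hres]] [_ [hcS _]] [_ [he0 hemin]]
  hxm hx0 hxe _ [hy [hyc hye]] hyu hp.
have hRV : ksubset R (valring v).
  move=> a ha; apply/hint; exists 1%N, [:: - a]; split => // [[|//] _|].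
    exact: RpredN.
  by rewrite big_ord1 /= expr1 expr0 mulr1 addrN.
have hcond := vge_sub_R hv hR hRV hres hfrac hfin hcS.
exact: (colon_length_iff hv hR hRV hloc hres hcond hcS he0 hemin hxm hx0 hxe hy hyc hye hyu hp).
Qed.
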